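(* Let $N$ be an even positive integer and $\hbar=1/(2\pi N)$. For every operator $A$ that is a finite linear combination of the operators $U^jV^k$ ($j,k\in\mathbb{Z}$), and every $m\in\{0,\dots,N-1\}$, \[ [X,F^\dagger AF]\,\Phi_m^{(0,0)}=[Y,F^\dagger AF]\,\Phi_m^{(0,0)}=0. \]
   Context: On $L^2(\mathbb{R})$ with $[\widehat{x},\widehat{p}]=i\hbar$, $U=e^{2\pi i\widehat{x}}$, $V=e^{2\pi i\widehat{p}}$. $|x\rangle_x$ are position eigen-distributions and $\Phi_m^{(0,0)}=N^{-1/2}\sum_{k\in\mathbb{Z}}|m/N+k\rangle_x$. $X^s=e^{is\widehat{x}/\hbar}$, $Y^s=e^{is\widehat{p}/\hbar}$ for real $s$ (so $X=U^N$, $Y=V^N$). Projections $L,R,E_x,O_x$ are multiplication in position representation by the indicators of $[0,1/2)+\mathbb{Z}$, $[1/2,1)+\mathbb{Z}$, $[0,1)+2\mathbb{Z}$, $[1,2)+2\mathbb{Z}$; $B,T,E_p,O_p$ are the analogous projections in momentum representation onto $[0,1/2)+\mathbb{Z}$, $[1/2,1)+\mathbb{Z}$, $[0,1)+2\mathbb{Z}$, $[1,2)+2\mathbb{Z}$; all act on $\delta$-comb distributions in the natural way. $S=\exp\!\left(-\frac{i\log2}{2\hbar}(\widehat{x}\widehat{p}+\widehat{p}\widehat{x})\right)$. The propagator is $F=S(L+X^{-1}R)(E_p+Y^{-1/2}O_p)$, which the paper also writes as $(E_x+X^{-1/2}O_x)(B+Y^{-1}T)S$. *)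

From Stdlib Require Import Reals List ClassicalEpsilon.
From Coquelicot Require Import Coquelicot.
Open Scope R_scope.

(** A (generalised) state is represented by its coefficient function
    [f : R -> C], standing for the distribution  sum_a f(a) |a>_x
    (position representation).  All states considered here are
    "dyadic periodic combs" (see [comb_struct]); the operators below are the
    natural actions of the paper's operators on such combs. *)
Definition state := R -> C.
Definition op := state -> state.

Definition hbar (N : nat) : R := / (2 * PI * INR N).

Definition cexp (t : R) : C := (cos t, sin t).

Fixpoint csum (n : nat) (g : nat -> C) : C :=
  match n with O => RtoC 0 | S n' => Cplus (csum n' g) (g n') end.

Definition ind (P : Prop) : C :=
  if excluded_middle_informative P then RtoC 1 else RtoC 0.

Definition op_add (A B : op) : op := fun f x => Cplus (A f x) (B f x).
Definition op_comp (A B : op) : op := fun f => A (B f).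
Definition commutator (A B : op) : op :=
  fun f x => Cminus (A (B f) x) (B (A f) x).

Definition Uop : op := fun f x => Cmult (cexp (2 * PI * x)) (f x).
Definition Xpow (N : nat) (s : R) : op :=
  fun f x => Cmult (cexp (s * x / hbar N)) (f x).
Definition Lop : op := fun f x => Cmult (ind (frac_part x < /2)) (f x).
Definition Rop : op := fun f x => Cmult (ind (/2 <= frac_part x)) (f x).
Definition Exop : op := fun f x => Cmult (ind (frac_part (x / 2) < /2)) (f x).
Definition Oxop : op := fun f x => Cmult (ind (/2 <= frac_part (x / 2))) (f x).

(** ** Translations (functions of p): e^{i s p/hbar} psi(x) = psi(x+s);
    on the coefficient function of a comb this is again f |-> f(. + s). *)
Definition Ypow (s : R) : op := fun f x => f (x + s).
(** V = e^{2 pi i p} = Y^{2 pi hbar} *)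
Definition Vop (N : nat) : op := fun f x => f (x + 2 * PI * hbar N).

(** ** Dilation S = exp(-(i log 2 / (2 hbar)) (xp+px)):
    (S psi)(x) = 2^{-1/2} psi(x/2), hence S |a>_x = sqrt 2 |2a>_x. *)
Definition Sop : op := fun f y => Cmult (RtoC (sqrt 2)) (f (y / 2)).
Definition Sinv : op := fun f y => Cmult (RtoC (/ sqrt 2)) (f (2 * y)).

Definition lat (N j : nat) : R := 2 * PI * hbar N / 2 ^ j.

Definition comb_struct (N j i : nat) (f : state) : Prop :=
  (1 <= j)%nat /\
  (forall x, f x <> RtoC 0 -> exists k : Z, x = IZR k * lat N j) /\
  (forall x, f (x + 2 ^ i) = f x).

(** For such a comb (M = 2^i / h = N 2^(i+j) points per period) the
    momentum representation is a comb at p_n = 2 pi hbar n / 2^i with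
    coefficients given by the DFT; multiplying by chi(p_n) and transforming
    back gives the following formula. *)
Definition mom_formula (N : nat) (chi : R -> Prop) (j i : nat) (f : state) : state :=
  fun x =>
    let h := lat N j in
    let M := (N * 2 ^ (i + j))%nat in
    Cmult (ind (exists k : Z, x = IZR k * h))
      (Cmult (RtoC (/ INR M))
        (csum M (fun n =>
           Cmult (ind (chi (2 * PI * hbar N * INR n / 2 ^ i)))
             (csum M (fun r =>
                Cmult (f (INR r * h))
                  (cexp (2 * PI * INR n * (x / h - INR r) / INR M))))))).

(** Momentum multiplier by the indicator of chi (evaluated with any valid
    comb structure; the result does not depend on the choice). *)
Definition mom_mult (N : nat) (chi : R -> Prop) : op := fun f =>
  match excluded_middle_informative
          (exists ji : nat * nat, comb_struct N (fst ji) (snd ji) f) with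
  | left H =>
      let ji := proj1_sig (constructive_indefinite_description _ H) in
      mom_formula N chi (fst ji) (snd ji) f
  | right _ => fun _ => RtoC 0
  end.

Definition Bop (N : nat) : op := mom_mult N (fun p => frac_part p < /2).
Definition Top (N : nat) : op := mom_mult N (fun p => /2 <= frac_part p).
Definition Epop (N : nat) : op := mom_mult N (fun p => frac_part (p / 2) < /2).
Definition Opop (N : nat) : op := mom_mult N (fun p => /2 <= frac_part (p / 2)).

Definition Fop (N : nat) : op :=
  op_comp Sop
    (op_comp (op_add Lop (op_comp (Xpow N (-1)) Rop))
             (op_add (Epop N) (op_comp (Ypow (-/2)) (Opop N)))).

(** F^dagger = (E_p + Y^{-1/2} O_p)^dagger (L + X^{-1} R)^dagger S^dagger
             = (E_p + O_p Y^{1/2}) (L + R X) S^{-1}                        *)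
Definition Fdag (N : nat) : op :=
  op_comp (op_add (Epop N) (op_comp (Opop N) (Ypow (/2))))
    (op_comp (op_add Lop (op_comp Rop (Xpow N 1))) Sinv).

(** ** Finite linear combinations  A = sum c U^j V^k  (list of (c, j, k)).
    (U^j V^k f)(x) = e^{2 pi i j x} f(x + 2 pi hbar k). *)
Definition UjVk (N : nat) (j k : Z) : op :=
  fun f x => Cmult (cexp (2 * PI * IZR j * x)) (f (x + 2 * PI * hbar N * IZR k)).

Definition Aop (N : nat) (l : list (C * Z * Z)) : op :=
  fun f x => fold_right
    (fun cjk acc => Cplus acc
        (Cmult (fst (fst cjk)) (UjVk N (snd (fst cjk)) (snd cjk) f x)))
    (RtoC 0) l.

Definition Phi (N m : nat) : state := fun x =>
  Cmult (RtoC (/ sqrt (INR N))) (ind (exists k : Z, x = INR m / INR N + IZR k)).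

Definition zero_state : state := fun _ => RtoC 0.

From Pilot Require Import Defs.
From Stdlib Require Import Reals List Lra Lia ZArith.
From Stdlib Require Import FunctionalExtensionality Classical ClassicalEpsilon.
From Coquelicot Require Import Coquelicot.
Open Scope R_scope.

(* The states fixed by X and Y ("torus states": combs on (1/N)Z of period 1, among
   them every Phi_m) are preserved by each U^j V^k and, for even N, by F and F^dagger;
   hence F^dagger A F Phi_m is again fixed by X and Y and both commutators vanish.

   F and F^dagger pass through "twisted combs" g on the lattice (1/2N)Z with
   g(x + 1/2) = e^{2 pi i N x} g(x), i.e. Y^{1/2} g = X g.  For the position parts
   this holds because the half shift swaps L and R while X^2 = 1 on the lattice and
   e^{i pi N} = 1.  For the momentum parts, O_p = X E_p X^{-1} on combs of period 1,
   so they reduce to E_p v + Y^{-1/2} X E_p v and (1 + X) E_p w; the factor 1 + X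
   kills the odd lattice points.  The momentum projections are computed by a discrete
   Fourier transform at any resolution of the comb; refining the lattice or doubling
   the period does not change the result, which makes them well defined. *)

Ltac Ceq_field := apply injective_projections; simpl; field.
Ltac Ceq_ring := apply injective_projections; simpl; ring.

Lemma cexp_add a b : cexp (a + b) = Cmult (cexp a) (cexp b).
Proof. unfold cexp, Cmult; simpl. rewrite cos_plus, sin_plus. f_equal; ring. Qed.

Lemma cexp_0 : cexp 0 = RtoC 1.
Proof. unfold cexp. rewrite cos_0, sin_0. reflexivity. Qed.

Lemma cexp_opp_mul t : Cmult (cexp (- t)) (cexp t) = RtoC 1.
Proof. rewrite <- cexp_add, Rplus_opp_l. apply cexp_0. Qed.

Lemma cexp_2PI_INR n : cexp (2 * PI * INR n) = RtoC 1.
Proof.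
  unfold cexp. replace (2 * PI * INR n) with (0 + 2 * INR n * PI) by ring.
  rewrite cos_period, sin_period, cos_0, sin_0. reflexivity.
Qed.

Lemma cexp_2PI_IZR k : cexp (2 * PI * IZR k) = RtoC 1.
Proof.
  destruct (Z_le_gt_dec 0 k) as [Hk | Hk].
  - rewrite <- (Z2Nat.id k Hk), <- INR_IZR_INZ. apply cexp_2PI_INR.
  - replace (2 * PI * IZR k) with (- (2 * PI * INR (Z.to_nat (- k)))).
    + rewrite <- (cexp_opp_mul (2 * PI * INR (Z.to_nat (- k)))), cexp_2PI_INR. ring.
    + rewrite INR_IZR_INZ, Z2Nat.id by lia. rewrite opp_IZR. ring.
Qed.

Lemma cexp_PI_odd q : cexp (PI * IZR (2 * q + 1)) = RtoC (-1).
Proof.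
  rewrite plus_IZR, mult_IZR.
  replace (PI * (2 * IZR q + 1)) with (2 * PI * IZR q + PI) by ring.
  rewrite cexp_add, cexp_2PI_IZR. unfold cexp. rewrite cos_PI, sin_PI.
  Ceq_ring.
Qed.

Lemma cexp_PI_sq k : Cmult (cexp (PI * IZR k)) (cexp (PI * IZR k)) = RtoC 1.
Proof. rewrite <- cexp_add, <- cexp_2PI_IZR with k. f_equal. ring. Qed.

Lemma cexp_opp_of_sq t : Cmult (cexp t) (cexp t) = RtoC 1 -> cexp (- t) = cexp t.
Proof.
  intros Hsq. rewrite <- (Cmult_1_r (cexp (- t))), <- Hsq, Cmult_assoc, cexp_opp_mul.
  apply Cmult_1_l.
Qed.

Lemma ind_true (P : Prop) : P -> Defs.ind P = RtoC 1.
Proof. intros H. unfold Defs.ind. destruct (excluded_middle_informative P); tauto. Qed.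

Lemma ind_false (P : Prop) : ~ P -> Defs.ind P = RtoC 0.
Proof. intros H. unfold Defs.ind. destruct (excluded_middle_informative P); tauto. Qed.

Lemma ind_iff (P Q : Prop) : (P <-> Q) -> Defs.ind P = Defs.ind Q.
Proof.
  intros H. unfold Defs.ind.
  destruct (excluded_middle_informative P), (excluded_middle_informative Q); tauto.
Qed.

Lemma frac_part_eq x k : IZR k <= x < IZR k + 1 -> frac_part x = x - IZR k.
Proof.
  intros H. now destruct (Int_part_frac_part_spec x k (x - IZR k)) as [_ ->]; [lra | ring |].
Qed.

Lemma frac_part_add_IZR x k : frac_part (x + IZR k) = frac_part x.
Proof.
  pose proof (base_fp x). pose proof (Rplus_Int_part_frac_part x).
  rewrite (frac_part_eq _ (Int_part x + k)); unfold frac_part; rewrite plus_IZR; lra.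
Qed.

Lemma frac_part_half_shift p k : frac_part ((p + 2 * INR k) / 2) = frac_part (p / 2).
Proof.
  replace ((p + 2 * INR k) / 2) with (p / 2 + IZR (Z.of_nat k)) by (rewrite <- INR_IZR_INZ; field).
  apply frac_part_add_IZR.
Qed.

Lemma ind_frac_lt_half_shift x :
  Defs.ind (frac_part (x + /2) < /2) = Defs.ind (/2 <= frac_part x).
Proof.
  pose proof (base_fp x). pose proof (Rplus_Int_part_frac_part x).
  destruct (Rlt_le_dec (frac_part x) (/2)).
  - rewrite (frac_part_eq (x + /2) (Int_part x)) by lra.
    rewrite !ind_false; auto; lra.
  - rewrite (frac_part_eq (x + /2) (Int_part x + 1)) by (rewrite plus_IZR; lra).
    rewrite plus_IZR, !ind_true; auto; lra.
Qed.

Lemma ind_half_le_frac_shift x :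
  Defs.ind (/2 <= frac_part (x + /2)) = Defs.ind (frac_part x < /2).
Proof.
  pose proof (base_fp x). pose proof (Rplus_Int_part_frac_part x).
  destruct (Rlt_le_dec (frac_part x) (/2)).
  - rewrite (frac_part_eq (x + /2) (Int_part x)) by lra.
    rewrite !ind_true; auto; lra.
  - rewrite (frac_part_eq (x + /2) (Int_part x + 1)) by (rewrite plus_IZR; lra).
    rewrite plus_IZR, !ind_false; auto; lra.
Qed.

Lemma csum_ext n g g' : (forall k, (k < n)%nat -> g k = g' k) -> csum n g = csum n g'.
Proof.
  induction n; intros H; simpl; auto.
  rewrite IHn, H; auto; intros; apply H; lia.
Qed.

Lemma csum_zero n g : (forall k, (k < n)%nat -> g k = RtoC 0) -> csum n g = RtoC 0.
Proof.
  induction n; intros H; simpl; auto.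
  rewrite IHn, H; try apply Cplus_0_l; auto; intros; apply H; lia.
Qed.

Lemma csum_scal n c g : csum n (fun k => Cmult c (g k)) = Cmult c (csum n g).
Proof. induction n; simpl. - Ceq_field. - rewrite IHn. ring. Qed.

Lemma csum_add_range a b g :
  csum (a + b) g = Cplus (csum a g) (csum b (fun n => g (a + n)%nat)).
Proof.
  induction b; simpl.
  - rewrite Nat.add_0_r. ring.
  - rewrite Nat.add_succ_r. simpl. rewrite IHb. ring.
Qed.

Lemma csum_S n g : csum (S n) g = Cplus (csum n g) (g n).
Proof. reflexivity. Qed.

Lemma csum_even_odd k g :
  csum (k + k) g = Cplus (csum k (fun n => g (2 * n)%nat)) (csum k (fun n => g (2 * n + 1)%nat)).
Proof.
  induction k.
  - simpl. Ceq_field.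
  - replace (S k + S k)%nat with (S (S (k + k))) by lia.
    rewrite !csum_S, IHk. replace (2 * k)%nat with (k + k)%nat by lia.
    replace (k + k + 1)%nat with (S (k + k)) by lia. ring.
Qed.

Lemma csum_ind_lower K (P : nat -> Prop) g :
  (forall n, (n < K + K)%nat -> (P n <-> (n < K)%nat)) ->
  csum (K + K) (fun n => Cmult (Defs.ind (P n)) (g n)) = csum K g.
Proof.
  intros HP. rewrite csum_add_range, (csum_zero K (fun n => Cmult _ (g (K + n)%nat))).
  - rewrite Cplus_0_r. apply csum_ext. intros n Hn. rewrite ind_true by (apply HP; lia).
    apply Cmult_1_l.
  - intros n Hn. rewrite ind_false by (rewrite HP; lia). apply Cmult_0_l.
Qed.

Lemma csum_ind_upper K (P : nat -> Prop) g :
  (forall n, (n < K + K)%nat -> (P n <-> (K <= n)%nat)) ->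
  csum (K + K) (fun n => Cmult (Defs.ind (P n)) (g n)) = csum K (fun n => g (K + n)%nat).
Proof.
  intros HP. rewrite csum_add_range, (csum_zero K (fun n => Cmult _ (g n))).
  - rewrite Cplus_0_l. apply csum_ext. intros n Hn. rewrite ind_true by (apply HP; lia).
    apply Cmult_1_l.
  - intros n Hn. rewrite ind_false by (rewrite HP; lia). apply Cmult_0_l.
Qed.

Lemma RtoC_inv_double a : a <> 0 -> Cmult (RtoC (/ (a + a))) (RtoC 2) = RtoC (/ a).
Proof. intros Ha. rewrite <- RtoC_mult. f_equal. field. split; [exact Ha | lra]. Qed.

Definition grid (a x : R) : Prop := exists k : Z, x = IZR k * a.

Definition supported_on_grid (a : R) (f : state) : Prop :=
  forall x, f x <> RtoC 0 -> grid a x.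

Definition periodic (T : R) (f : state) : Prop := forall x, f (x + T) = f x.

Lemma grid_shift a x k : grid a (x + IZR k * a) <-> grid a x.
Proof.
  split; intros [j Hj]; [exists (j - k)%Z | exists (j + k)%Z];
    rewrite ?minus_IZR, ?plus_IZR; lra.
Qed.

Lemma grid_coarsen a x n : grid (INR n * a) x -> grid a x.
Proof. intros [k Hk]. exists (k * Z.of_nat n)%Z. rewrite mult_IZR, <- INR_IZR_INZ. lra. Qed.

Lemma grid_quotient a x : a <> 0 -> grid a x -> exists k, x / a = IZR k.
Proof. intros Ha [k ->]. exists k. field. exact Ha. Qed.

Lemma grid_half_odd a r : 0 < a -> ~ grid a (INR (2 * r + 1) * (a / 2)).
Proof.
  intros Ha [k Hk].
  assert (IZR (Z.of_nat (2 * r + 1)) = IZR (2 * k)) as E.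
  { rewrite <- INR_IZR_INZ, mult_IZR. apply (Rmult_eq_reg_r (a / 2)); [|lra]. rewrite Hk. field. }
  apply eq_IZR in E. lia.
Qed.

Lemma ind_grid_half a x :
  0 < a ->
  Cmult (Defs.ind (grid (a / 2) x)) (Cplus (RtoC 1) (cexp (2 * PI * (x / a)))) =
  Cmult (Defs.ind (grid a x)) (RtoC 2).
Proof.
  intros Ha. destruct (classic (grid (a / 2) x)) as [[k Hk] | Hn].
  - destruct (Z.Even_or_Odd k) as [[q ->] | [q ->]].
    + assert (x / a = IZR q) as Hq by (rewrite Hk, mult_IZR; field; lra).
      rewrite Hq, cexp_2PI_IZR, !ind_true.
      * Ceq_field.
      * exists q. rewrite Hk, mult_IZR. field.
      * exists (2 * q)%Z. exact Hk.
    + replace (2 * PI * (x / a)) with (PI * IZR (2 * q + 1)) by (rewrite Hk; field; lra).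
      rewrite cexp_PI_odd, (ind_true (grid (a / 2) x)), ind_false.
      * Ceq_field.
      * intros [j Hj]. rewrite Hk, plus_IZR, mult_IZR in Hj.
        assert (IZR (2 * q + 1) = IZR (2 * j)) as E by (rewrite plus_IZR, !mult_IZR; nra).
        apply eq_IZR in E. lia.
      * exists (2 * q + 1)%Z. exact Hk.
  - rewrite (ind_false (grid (a / 2) x)), ind_false.
    + Ceq_field.
    + intros [j Hj]. apply Hn. exists (2 * j)%Z. rewrite Hj, mult_IZR. field.
    + exact Hn.
Qed.

Lemma supported_on_grid_mult a (c : R -> C) f :
  supported_on_grid a f -> supported_on_grid a (fun x => Cmult (c x) (f x)).
Proof.
  intros Hf x Hx. apply Hf. intros E. apply Hx. rewrite E. apply Cmult_0_r.
Qed.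

Lemma supported_on_grid_add a f g :
  supported_on_grid a f -> supported_on_grid a g ->
  supported_on_grid a (fun x => Cplus (f x) (g x)).
Proof.
  intros Hf Hg x Hx. destruct (classic (f x = RtoC 0)) as [E | E]; auto.
  apply Hg. intros E'. apply Hx. rewrite E, E'. apply Cplus_0_l.
Qed.

Lemma periodic_pow2 f i : periodic 1 f -> periodic (2 ^ i) f.
Proof.
  intros Hf. induction i; intros x; simpl; [exact (Hf x)|].
  replace (x + 2 * 2 ^ i) with (x + 2 ^ i + 2 ^ i) by ring. now rewrite !IHi.
Qed.

Definition dft (M : nat) (c : nat -> C) (n : nat) (y : R) : C :=
  csum M (fun r => Cmult (c r) (cexp (2 * PI * INR n * (y - INR r) / INR M))).

Section Dft.

Variable M : nat.
Hypothesis HM : (0 < M)%nat.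

Let INR_M_pos : 0 < INR M.
Proof. apply lt_0_INR. exact HM. Qed.

Local Ltac field_M := field; pose proof INR_M_pos; repeat split; lra.

Lemma dft_refine c c' n y :
  (forall r, c' (2 * r)%nat = c r) -> (forall r, c' (2 * r + 1)%nat = RtoC 0) ->
  dft (M + M) c' n (2 * y) = dft M c n y.
Proof.
  intros Heven Hodd. unfold dft.
  rewrite csum_even_odd, (csum_zero M (fun r => Cmult (c' (2 * r + 1)%nat) _)).
  - rewrite Cplus_0_r. apply csum_ext. intros r _. rewrite Heven. do 2 f_equal.
    rewrite mult_INR, plus_INR. simpl (INR 2). field_M.
  - intros r _. rewrite Hodd. apply Cmult_0_l.
Qed.

Lemma dft_shift_period c n y : dft M c (M + n) y = Cmult (cexp (2 * PI * y)) (dft M c n y).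
Proof.
  unfold dft. rewrite <- csum_scal. apply csum_ext. intros r _.
  replace (2 * PI * INR (M + n) * (y - INR r) / INR M) with
    (2 * PI * y + (2 * PI * IZR (- Z.of_nat r) + 2 * PI * INR n * (y - INR r) / INR M)).
  - rewrite !cexp_add, cexp_2PI_IZR. ring.
  - rewrite opp_IZR, <- INR_IZR_INZ, plus_INR. field_M.
Qed.

Lemma dft_periodic c n y : dft M c n (y + INR M) = dft M c n y.
Proof.
  unfold dft. apply csum_ext. intros r _. f_equal.
  replace (2 * PI * INR n * (y + INR M - INR r) / INR M) with
    (2 * PI * INR n + 2 * PI * INR n * (y - INR r) / INR M) by field_M.
  rewrite cexp_add, cexp_2PI_INR. apply Cmult_1_l.
Qed.

Lemma dft_shift_half c n y :
  dft (M + M) c (M + n) y =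
  Cmult (cexp (PI * y)) (dft (M + M) (fun r => Cmult (cexp (- (PI * INR r))) (c r)) n y).
Proof.
  unfold dft. rewrite <- csum_scal. apply csum_ext. intros r _.
  replace (2 * PI * INR (M + n) * (y - INR r) / INR (M + M)) with
    (PI * y + (- (PI * INR r) + 2 * PI * INR n * (y - INR r) / INR (M + M))).
  - rewrite !cexp_add. ring.
  - rewrite !plus_INR. field_M.
Qed.

Lemma dft_double c k y :
  (forall r, c (M + r)%nat = c r) ->
  dft (M + M) c k y =
  Cmult (Cplus (RtoC 1) (cexp (- (PI * INR k))))
    (csum M (fun r => Cmult (c r) (cexp (2 * PI * INR k * (y - INR r) / INR (M + M))))).
Proof.
  intros Hc. unfold dft. rewrite csum_add_range, Cmult_plus_distr_r, Cmult_1_l, <- csum_scal.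
  f_equal. apply csum_ext. intros r _.
  rewrite Hc.
  replace (2 * PI * INR k * (y - INR (M + r)) / INR (M + M)) with
    (- (PI * INR k) + 2 * PI * INR k * (y - INR r) / INR (M + M)).
  - rewrite cexp_add. ring.
  - rewrite !plus_INR. field_M.
Qed.

Lemma dft_double_even c n y :
  (forall r, c (M + r)%nat = c r) ->
  dft (M + M) c (2 * n) y = Cmult (RtoC 2) (dft M c n y).
Proof.
  intros Hc. rewrite dft_double by exact Hc.
  replace (- (PI * INR (2 * n))) with (2 * PI * IZR (- Z.of_nat n))
    by (rewrite opp_IZR, <- INR_IZR_INZ, mult_INR; simpl (INR 2); ring).
  rewrite cexp_2PI_IZR. unfold dft.
  replace (Cplus (RtoC 1) (RtoC 1)) with (RtoC 2) by Ceq_field. f_equal.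
  apply csum_ext. intros r _. do 2 f_equal.
  rewrite !mult_INR, plus_INR. simpl (INR 2). field_M.
Qed.

Lemma dft_double_odd c n y :
  (forall r, c (M + r)%nat = c r) -> dft (M + M) c (2 * n + 1) y = RtoC 0.
Proof.
  intros Hc. rewrite dft_double by exact Hc.
  replace (- (PI * INR (2 * n + 1))) with (PI * IZR (2 * (- Z.of_nat n - 1) + 1))
    by (rewrite plus_IZR, mult_IZR, minus_IZR, opp_IZR, <- INR_IZR_INZ, plus_INR, mult_INR;
        simpl (INR 2); simpl (INR 1); ring).
  rewrite cexp_PI_odd. replace (Cplus (RtoC 1) (RtoC (-1))) with (RtoC 0) by Ceq_field.
  apply Cmult_0_l.
Qed.

End Dft.

Section Lattice.

Variable N : nat.
Hypothesis HN : (0 < N)%nat.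

Local Notation h := (lat N 1).

Let INR_N_pos : 0 < INR N.
Proof. apply lt_0_INR. exact HN. Qed.

Lemma two_PI_hbar : 2 * PI * hbar N = / INR N.
Proof. unfold hbar. pose proof PI_neq0. field. split; lra. Qed.

Lemma lat_S j : lat N (S j) = lat N j / 2.
Proof. unfold lat. simpl. field. apply pow_nonzero. lra. Qed.

Lemma lat_pos j : 0 < lat N j.
Proof.
  unfold lat. rewrite two_PI_hbar. apply Rdiv_lt_0_compat.
  - now apply Rinv_0_lt_compat.
  - apply pow_lt. lra.
Qed.

Lemma lat_1_eq : h = / (2 * INR N).
Proof. unfold lat. rewrite two_PI_hbar. simpl. field. lra. Qed.

Lemma lat_1_pow j : h = INR (2 ^ j) * lat N (S j).
Proof.
  unfold lat. rewrite pow_INR. replace (INR 2) with 2 by (simpl; ring). simpl pow. field.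
  apply pow_nonzero. lra.
Qed.

Lemma half_eq_lat : / 2 = IZR (Z.of_nat N) * h.
Proof. rewrite <- INR_IZR_INZ, lat_1_eq. field. lra. Qed.

Lemma one_eq_lat : 1 = IZR (Z.of_nat (N + N)) * h.
Proof. rewrite <- INR_IZR_INZ, plus_INR, lat_1_eq. field. lra. Qed.

Lemma inv_N_eq_lat : / INR N = INR 2 * h.
Proof. rewrite lat_1_eq. simpl (INR 2). field. lra. Qed.

Lemma grid_half_shift_opp x : grid h (x + - /2) <-> grid h x.
Proof. rewrite half_eq_lat, Ropp_mult_distr_l, <- opp_IZR. apply grid_shift. Qed.

Lemma grid_one_shift x : grid h (x + 1) <-> grid h x.
Proof. rewrite one_eq_lat. apply grid_shift. Qed.

Lemma Xpow_apply s f x : Xpow N s f x = Cmult (cexp (s * (PI * (x / h)))) (f x).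
Proof.
  unfold Xpow, hbar. rewrite lat_1_eq. do 2 f_equal. pose proof PI_neq0. field. split; lra.
Qed.

Lemma phase_one_shift (s : Z) x :
  cexp (IZR s * (PI * ((x + 1) / h))) = cexp (IZR s * (PI * (x / h))).
Proof.
  pose proof (lat_pos 1).
  replace (IZR s * (PI * ((x + 1) / h))) with
    (2 * PI * IZR (s * Z.of_nat N) + IZR s * (PI * (x / h))).
  - rewrite cexp_add, cexp_2PI_IZR. apply Cmult_1_l.
  - rewrite mult_IZR, <- INR_IZR_INZ, lat_1_eq. field. lra.
Qed.

Lemma phase_grid_sq x : grid h x -> Cmult (cexp (PI * (x / h))) (cexp (PI * (x / h))) = RtoC 1.
Proof.
  intros Hx. destruct (grid_quotient _ _ (Rgt_not_eq _ _ (lat_pos 1)) Hx) as [k ->].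
  apply cexp_PI_sq.
Qed.

Lemma phase_grid_odd k : cexp (PI * (IZR (2 * k + 1) * h / h)) = RtoC (-1).
Proof.
  pose proof (lat_pos 1). replace (IZR (2 * k + 1) * h / h) with (IZR (2 * k + 1)) by (field; lra).
  apply cexp_PI_odd.
Qed.

(* The comb structure [(1, 0)] of [comb_struct]. *)
Definition fine_comb (f : state) : Prop := supported_on_grid h f /\ periodic 1 f.

Lemma mom_formula_dft chi j i f x :
  mom_formula N chi j i f x =
  Cmult (Defs.ind (grid (lat N j) x))
    (Cmult (RtoC (/ INR (N * 2 ^ (i + j))))
       (csum (N * 2 ^ (i + j)) (fun n =>
          Cmult (Defs.ind (chi (2 * PI * hbar N * INR n / 2 ^ i)))
            (dft (N * 2 ^ (i + j)) (fun r => f (INR r * lat N j)) n (x / lat N j))))).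
Proof. reflexivity. Qed.

Lemma momentum_shift i j n :
  2 * PI * hbar N * INR (N * 2 ^ (i + S j) + n) / 2 ^ i =
  2 * PI * hbar N * INR n / 2 ^ i + 2 * INR (2 ^ j).
Proof.
  rewrite two_PI_hbar, plus_INR, mult_INR, !pow_INR, pow_add.
  replace (INR 2) with 2 by (simpl; ring). simpl pow. field.
  split; [lra | apply pow_nonzero; lra].
Qed.

Lemma lattice_period i j : INR (N * 2 ^ (i + j)) * lat N j = 2 ^ i.
Proof.
  unfold lat. rewrite two_PI_hbar, mult_INR, pow_INR, pow_add.
  replace (INR 2) with 2 by (simpl; ring). field.
  split; [lra | apply pow_nonzero; lra].
Qed.

Lemma mom_formula_refine_lattice chi j i f x :
  (1 <= j)%nat ->
  (forall p k, chi (p + 2 * INR k) <-> chi p) ->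
  supported_on_grid (lat N j) f ->
  mom_formula N chi (S j) i f x = mom_formula N chi j i f x.
Proof.
  intros Hj Hchi Hf. destruct j as [|j]; [lia|]. rewrite !mom_formula_dft.
  set (M := (N * 2 ^ (i + S j))%nat).
  assert (HM : (0 < M)%nat) by (pose proof (Nat.pow_nonzero 2 (i + S j)); unfold M; lia).
  replace (N * 2 ^ (i + S (S j)))%nat with (M + M)%nat
    by (unfold M; rewrite (Nat.add_succ_r i (S j)), Nat.pow_succ_r'; lia).
  pose proof (lat_pos (S j)) as Ha. rewrite (lat_S (S j)). set (a := lat N (S j)) in *.
  set (c := fun r => f (INR r * a)).
  replace (x / (a / 2)) with (2 * (x / a)) by (field; lra).
  set (chin := fun n => Defs.ind (chi (2 * PI * hbar N * INR n / 2 ^ i))).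
  rewrite (csum_ext (M + M) _ (fun n => Cmult (chin n) (dft M c n (x / a)))).
  2: { intros n _. f_equal. apply dft_refine; [exact HM | |].
       - intros r. unfold c. f_equal. rewrite mult_INR. simpl (INR 2). field.
       - intros r. destruct (classic (f (INR (2 * r + 1) * (a / 2)) = RtoC 0)) as [E | E];
           [exact E | exfalso; exact (grid_half_odd a r Ha (Hf _ E))]. }
  rewrite csum_add_range.
  rewrite (csum_ext M (fun n => Cmult (chin (M + n)%nat) (dft M c (M + n) (x / a)))
             (fun n => Cmult (cexp (2 * PI * (x / a))) (Cmult (chin n) (dft M c n (x / a))))).
  2: { intros n _. rewrite dft_shift_period by exact HM.
       replace (chin (M + n)%nat) with (chin n); [ring|].
       unfold chin, M. apply ind_iff. rewrite momentum_shift. symmetry. apply Hchi. }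
  rewrite csum_scal. set (total := csum M (fun n => Cmult (chin n) (dft M c n (x / a)))).
  transitivity
    (Cmult (Cmult (Defs.ind (grid (a / 2) x)) (Cplus (RtoC 1) (cexp (2 * PI * (x / a)))))
           (Cmult (RtoC (/ INR (M + M))) total)); [ring|].
  rewrite ind_grid_half, plus_INR, <- (RtoC_inv_double (INR M))
    by (exact Ha || (apply not_0_INR; lia)).
  unfold total, chin. ring.
Qed.

Lemma mom_formula_refine_period chi j i f x :
  periodic (2 ^ i) f ->
  mom_formula N chi j (S i) f x = mom_formula N chi j i f x.
Proof.
  intros Hf. rewrite !mom_formula_dft.
  set (M := (N * 2 ^ (i + j))%nat).
  assert (HM : (0 < M)%nat) by (pose proof (Nat.pow_nonzero 2 (i + j)); unfold M; lia).
  replace (N * 2 ^ (S i + j))%nat with (M + M)%nat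
    by (unfold M; simpl Nat.add; rewrite Nat.pow_succ_r'; lia).
  set (c := fun r => f (INR r * lat N j)).
  assert (Hc : forall r, c (M + r)%nat = c r).
  { intros r. unfold c, M. rewrite plus_INR, Rmult_plus_distr_r, lattice_period, Rplus_comm.
    apply Hf. }
  set (chin := fun n => Defs.ind (chi (2 * PI * hbar N * INR n / 2 ^ i))).
  rewrite csum_even_odd.
  rewrite (csum_zero M (fun n => Cmult _ (dft (M + M) c (2 * n + 1) _)))
    by (intros n _; rewrite dft_double_odd by assumption; apply Cmult_0_r).
  rewrite Cplus_0_r.
  rewrite (csum_ext M _ (fun n => Cmult (RtoC 2) (Cmult (chin n) (dft M c n (x / lat N j))))).
  2: { intros n _. rewrite dft_double_even by assumption. unfold chin.
       replace (2 * PI * hbar N * INR (2 * n) / 2 ^ S i) with (2 * PI * hbar N * INR n / 2 ^ i);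
         [ring|].
       rewrite mult_INR. simpl. field. apply pow_nonzero. lra. }
  rewrite csum_scal, plus_INR, <- (RtoC_inv_double (INR M)) by (apply not_0_INR; lia).
  unfold chin. ring.
Qed.

Lemma mom_formula_fine chi j i f x :
  (1 <= j)%nat -> (forall p k, chi (p + 2 * INR k) <-> chi p) -> fine_comb f ->
  mom_formula N chi j i f x = mom_formula N chi 1 0 f x.
Proof.
  intros Hj Hchi [Hs Hp].
  transitivity (mom_formula N chi j 0 f x).
  { induction i as [|i IH]; [reflexivity|].
    rewrite mom_formula_refine_period; [exact IH | now apply periodic_pow2]. }
  destruct j as [|j]; [lia|]. clear Hj.
  induction j as [|j IH]; [reflexivity|].
  rewrite mom_formula_refine_lattice; [exact IH | lia | exact Hchi |].
  intros y Hy. apply (grid_coarsen _ _ (2 ^ j)). rewrite <- lat_1_pow. now apply Hs.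
Qed.

(* [mom_mult] uses an arbitrary comb structure of [f]; by the refinement lemmas they all
   agree with the coarsest one, [(1, 0)]. *)
Lemma mom_mult_fine chi f :
  (forall p k, chi (p + 2 * INR k) <-> chi p) -> fine_comb f ->
  mom_mult N chi f = mom_formula N chi 1 0 f.
Proof.
  intros Hchi Hf. unfold mom_mult.
  destruct (excluded_middle_informative _) as [H | H].
  - destruct (constructive_indefinite_description _ H) as [[j i] Hji].
    cbn [proj1_sig fst snd]. destruct Hji as [Hj _].
    apply functional_extensionality. intros x. now apply mom_formula_fine.
  - exfalso. apply H. exists (1%nat, 0%nat). split; [apply le_n | exact Hf].
Qed.

(* At lattice level [(1, 0)] the momenta are [p_n = n / N] with [n < 2N]. *)
Lemma momentum_half_lt n :
  (n < N + N)%nat ->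
  (frac_part (2 * PI * hbar N * INR n / 2 ^ 0 / 2) < / 2 <-> (n < N)%nat).
Proof.
  intros Hn. apply lt_INR in Hn. rewrite plus_INR in Hn. pose proof (pos_INR n).
  set (t := 2 * PI * hbar N * INR n / 2 ^ 0 / 2).
  assert (Ht : t * (2 * INR N) = INR n) by (unfold t; rewrite two_PI_hbar; simpl; field; lra).
  rewrite (frac_part_eq t 0) by (simpl; split; nra).
  simpl (IZR 0). rewrite Rminus_0_r. split; intros Hlt.
  - apply INR_lt. nra.
  - apply lt_INR in Hlt. nra.
Qed.

Lemma Epop_fine f x :
  fine_comb f ->
  Epop N f x =
  Cmult (Defs.ind (grid h x))
    (Cmult (RtoC (/ INR (N + N)))
       (csum N (fun n => dft (N + N) (fun r => f (INR r * h)) n (x / h)))).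
Proof.
  intros Hf. unfold Epop.
  rewrite mom_mult_fine; [| intros p k; cbv beta; now rewrite frac_part_half_shift | exact Hf].
  rewrite mom_formula_dft. replace (N * 2 ^ (0 + 1))%nat with (N + N)%nat by (simpl; lia).
  rewrite (csum_ind_lower N (fun n => frac_part (2 * PI * hbar N * INR n / 2 ^ 0 / 2) < / 2));
    [reflexivity|].
  exact momentum_half_lt.
Qed.

Lemma Opop_fine f x :
  fine_comb f ->
  Opop N f x =
  Cmult (Defs.ind (grid h x))
    (Cmult (RtoC (/ INR (N + N)))
       (csum N (fun n => dft (N + N) (fun r => f (INR r * h)) (N + n) (x / h)))).
Proof.
  intros Hf. unfold Opop.
  rewrite mom_mult_fine; [| intros p k; cbv beta; now rewrite frac_part_half_shift | exact Hf].
  rewrite mom_formula_dft. replace (N * 2 ^ (0 + 1))%nat with (N + N)%nat by (simpl; lia).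
  rewrite (csum_ind_upper N (fun n => / 2 <= frac_part (2 * PI * hbar N * INR n / 2 ^ 0 / 2)));
    [reflexivity|].
  intros n Hn. pose proof (momentum_half_lt n Hn) as E. split; intros H.
  - destruct (Nat.lt_ge_cases n N) as [Hlt | Hge]; [apply E in Hlt; lra | exact Hge].
  - apply Rnot_lt_le. intros Hlt. apply E in Hlt. lia.
Qed.

Lemma Xpow_fine (s : Z) f : fine_comb f -> fine_comb (Xpow N (IZR s) f).
Proof.
  intros [Hs Hp]. split.
  - apply supported_on_grid_mult. exact Hs.
  - intros x. rewrite !Xpow_apply, phase_one_shift, Hp. reflexivity.
Qed.

Lemma Xpow_inv f : Xpow N (-1) (Xpow N 1 f) = f.
Proof.
  apply functional_extensionality. intros x. rewrite !Xpow_apply, Cmult_assoc.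
  replace (-1 * (PI * (x / h))) with (- (1 * (PI * (x / h)))) by ring.
  rewrite cexp_opp_mul. apply Cmult_1_l.
Qed.

Lemma Epop_fine_comb f : fine_comb f -> fine_comb (Epop N f).
Proof.
  intros Hf. split.
  - intros x Hx. rewrite Epop_fine in Hx by exact Hf.
    apply NNPP. intros Hn. apply Hx. rewrite ind_false by exact Hn. apply Cmult_0_l.
  - intros x. rewrite !Epop_fine by exact Hf. f_equal.
    + apply ind_iff, grid_one_shift.
    + replace ((x + 1) / h) with (x / h + INR (N + N)).
      * f_equal. apply csum_ext. intros n _. apply dft_periodic. lia.
      * pose proof (lat_pos 1). rewrite INR_IZR_INZ, one_eq_lat. field. lra.
Qed.

(* Multiplication by [X] shifts momenta by one unit, carrying [[0,1)+2Z] onto [[1,2)+2Z]. *)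
Lemma Opop_fine_conj f x :
  fine_comb f -> Opop N f x = Xpow N 1 (Epop N (Xpow N (-1) f)) x.
Proof.
  intros Hf.
  rewrite Opop_fine, Xpow_apply, Epop_fine by (exact Hf || exact (Xpow_fine (-1) f Hf)).
  rewrite (csum_ext N _ (fun n => Cmult (cexp (PI * (x / h)))
             (dft (N + N) (fun r => Cmult (cexp (- (PI * INR r))) (f (INR r * h))) n (x / h))))
    by (intros n _; apply dft_shift_half; exact HN).
  rewrite csum_scal, Rmult_1_l.
  replace (fun r => Xpow N (-1) f (INR r * h))
    with (fun r => Cmult (cexp (- (PI * INR r))) (f (INR r * h))); [ring|].
  apply functional_extensionality. intros r. rewrite Xpow_apply. do 2 f_equal.
  pose proof (lat_pos 1). field. lra.
Qed.

Definition torus_state (f : state) : Prop := supported_on_grid (/ INR N) f /\ periodic 1 f.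

Definition twisted_comb (g : state) : Prop :=
  supported_on_grid h g /\ forall x, g (x + / 2) = Xpow N 1 g x.

Lemma torus_fine f : torus_state f -> fine_comb f.
Proof.
  intros [Hs Hp]. split; [|exact Hp].
  intros x Hx. apply (grid_coarsen _ _ 2). rewrite <- inv_N_eq_lat. now apply Hs.
Qed.

Lemma torus_Xpow (s : Z) f : torus_state f -> Xpow N (IZR s) f = f.
Proof.
  intros [Hs _]. apply functional_extensionality. intros x. rewrite Xpow_apply.
  destruct (classic (f x = RtoC 0)) as [E | E]; [rewrite E; apply Cmult_0_r|].
  destruct (Hs x E) as [k Hk]. pose proof (lat_pos 1).
  replace (IZR s * (PI * (x / h))) with (2 * PI * IZR (s * k)).
  - rewrite cexp_2PI_IZR. apply Cmult_1_l.
  - rewrite Hk, mult_IZR, inv_N_eq_lat. replace (INR 2) with 2 by (simpl; ring). field. lra.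
Qed.

Lemma torus_Ypow f : torus_state f -> Ypow 1 f = f.
Proof. intros [_ Hp]. apply functional_extensionality. exact Hp. Qed.

Lemma torus_add f g : torus_state f -> torus_state g -> torus_state (fun x => Cplus (f x) (g x)).
Proof.
  intros [Hfs Hfp] [Hgs Hgp]. split.
  - now apply supported_on_grid_add.
  - intros x. now rewrite Hfp, Hgp.
Qed.

Lemma torus_scale c f : torus_state f -> torus_state (fun x => Cmult c (f x)).
Proof.
  intros [Hs Hp]. split.
  - now apply (supported_on_grid_mult _ (fun _ => c)).
  - intros x. now rewrite Hp.
Qed.

Lemma Phi_torus m : torus_state (Phi N m).
Proof.
  split.
  - intros x Hx. unfold Phi in Hx. apply NNPP. intros Hn. apply Hx.
    rewrite ind_false; [apply Cmult_0_r|]. intros [k Hk]. apply Hn.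
    exists (Z.of_nat m + k * Z.of_nat N)%Z.
    rewrite Hk, plus_IZR, mult_IZR, <- !INR_IZR_INZ. field. lra.
  - intros x. unfold Phi. f_equal. apply ind_iff. split; intros [k Hk].
    + exists (k - 1)%Z. rewrite minus_IZR. lra.
    + exists (k + 1)%Z. rewrite plus_IZR. lra.
Qed.

Lemma UjVk_torus j k v : torus_state v -> torus_state (UjVk N j k v).
Proof.
  intros [Hs Hp]. split.
  - intros x Hx. unfold UjVk in Hx.
    destruct (Hs (x + 2 * PI * hbar N * IZR k)) as [q Hq].
    { intros E. apply Hx. rewrite E. apply Cmult_0_r. }
    exists (q - k)%Z. rewrite two_PI_hbar in Hq. rewrite minus_IZR. lra.
  - intros x. unfold UjVk.
    replace (x + 1 + 2 * PI * hbar N * IZR k) with (x + 2 * PI * hbar N * IZR k + 1) by ring.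
    replace (2 * PI * IZR j * (x + 1)) with (2 * PI * IZR j + 2 * PI * IZR j * x) by ring.
    now rewrite Hp, cexp_add, cexp_2PI_IZR, Cmult_1_l.
Qed.

Lemma Aop_torus l v : torus_state v -> torus_state (Aop N l v).
Proof.
  intros Hv. induction l as [|[[c j] k] l IH].
  - split; [intros x Hx; now exfalso | intros x; reflexivity].
  - exact (torus_add _ _ IH (torus_scale c _ (UjVk_torus j k v Hv))).
Qed.

Lemma torus_of_fine_add_Xpow u :
  fine_comb u -> torus_state (fun x => Cplus (u x) (Xpow N 1 u x)).
Proof.
  intros [Hs Hp]. split.
  - intros x Hx. rewrite Xpow_apply, Rmult_1_l in Hx.
    destruct (Hs x) as [k Hk]; [intros E; apply Hx; rewrite E; ring|].
    destruct (Z.Even_or_Odd k) as [[q Hq] | [q Hq]]; subst k.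
    + exists q. rewrite Hk, mult_IZR, inv_N_eq_lat. simpl (INR 2). ring.
    + exfalso. apply Hx. rewrite Hk, phase_grid_odd.
      Ceq_ring.
  - intros x. now rewrite !Xpow_apply, (phase_one_shift 1), Hp.
Qed.

Section EvenN.

Hypothesis HNeven : Nat.Even N.

Lemma phase_half_shift (s : Z) x :
  cexp (IZR s * (PI * ((x + / 2) / h))) = cexp (IZR s * (PI * (x / h))).
Proof.
  destruct HNeven as [q Hq]. assert (0 < INR q) by (apply lt_0_INR; lia).
  replace (IZR s * (PI * ((x + / 2) / h))) with
    (2 * PI * IZR (s * Z.of_nat q) + IZR s * (PI * (x / h))).
  - rewrite cexp_add, cexp_2PI_IZR. apply Cmult_1_l.
  - rewrite mult_IZR, <- INR_IZR_INZ, lat_1_eq.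
    replace (INR N) with (2 * INR q) by (rewrite Hq, mult_INR; reflexivity). field. lra.
Qed.

Lemma twisted_fine g : twisted_comb g -> fine_comb g.
Proof.
  intros [Hs Ht]. split; [exact Hs|]. intros x.
  replace (x + 1) with (x + / 2 + / 2) by field.
  rewrite Ht, Xpow_apply, Ht, Xpow_apply, (phase_half_shift 1), Rmult_1_l, Cmult_assoc.
  destruct (classic (g x = RtoC 0)) as [E | E].
  - rewrite E. ring.
  - rewrite phase_grid_sq by (now apply Hs). apply Cmult_1_l.
Qed.

Lemma twisted_of_fine_add_shift u :
  fine_comb u -> twisted_comb (fun x => Cplus (u x) (Ypow (- / 2) (Xpow N 1 u) x)).
Proof.
  intros [Hs Hp]. split.
  - apply supported_on_grid_add; [exact Hs|].
    intros x Hx. unfold Ypow in Hx. rewrite Xpow_apply in Hx.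
    apply grid_half_shift_opp, Hs. intros E. apply Hx. rewrite E. apply Cmult_0_r.
  - intros x. unfold Ypow. cbv beta. rewrite Xpow_apply. cbv beta. rewrite !Xpow_apply.
    replace (x + / 2 + - / 2) with x by ring.
    rewrite <- (phase_half_shift 1 (x + - / 2)).
    replace (x + - / 2 + / 2) with x by ring.
    replace (u (x + / 2)) with (u (x + - / 2)) by (rewrite <- Hp; f_equal; field).
    set (c := cexp (1 * (PI * (x / h)))). set (v := u (x + - / 2)).
    destruct (classic (v = RtoC 0)) as [E | E]; [rewrite E; ring|].
    assert (Hsq : Cmult c c = RtoC 1).
    { unfold c. rewrite Rmult_1_l. apply phase_grid_sq, grid_half_shift_opp, Hs, E. }
    transitivity (Cplus (Cmult (Cmult c c) v) (Cmult c (u x))); [rewrite Hsq; ring | ring].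
Qed.

Lemma twisted_of_torus_pos v :
  torus_state v -> twisted_comb (op_add Lop (op_comp Rop (Xpow N 1)) (Sinv v)).
Proof.
  intros [Hs Hp].
  set (w := op_add Lop (op_comp Rop (Xpow N 1)) (Sinv v)).
  assert (Hw : forall x, w x =
    Cmult (Cplus (Defs.ind (frac_part x < / 2))
                 (Cmult (Defs.ind (/ 2 <= frac_part x)) (cexp (1 * (PI * (x / h))))))
          (Cmult (RtoC (/ sqrt 2)) (v (2 * x)))).
  { intros x. unfold w, op_add, op_comp, Lop, Rop, Sinv. rewrite Xpow_apply. ring. }
  split.
  - intros x Hx. rewrite Hw in Hx. destruct (Hs (2 * x)) as [k Hk].
    { intros E. apply Hx. rewrite E. ring. }
    exists k. rewrite inv_N_eq_lat in Hk. simpl (INR 2) in Hk. lra.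
  - intros x. rewrite Xpow_apply, !Hw.
    replace (2 * (x + / 2)) with (2 * x + 1) by field.
    rewrite Hp, ind_frac_lt_half_shift, ind_half_le_frac_shift, (phase_half_shift 1).
    set (c := cexp (1 * (PI * (x / h)))). set (s := Cmult (RtoC (/ sqrt 2)) (v (2 * x))).
    destruct (classic (v (2 * x) = RtoC 0)) as [E | E]; [unfold s; rewrite E; ring|].
    assert (Hsq : Cmult c c = RtoC 1).
    { unfold c. rewrite Rmult_1_l. apply phase_grid_sq. destruct (Hs _ E) as [k Hk].
      exists k. rewrite inv_N_eq_lat in Hk. simpl (INR 2) in Hk. lra. }
    transitivity (Cmult (Cplus (Cmult (Cmult c c) (Defs.ind (/ 2 <= frac_part x)))
                               (Cmult (Defs.ind (frac_part x < / 2)) c)) s);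
      [rewrite Hsq; ring | ring].
Qed.

Lemma torus_of_twisted_pos g :
  twisted_comb g -> torus_state (op_comp Sop (op_add Lop (op_comp (Xpow N (-1)) Rop)) g).
Proof.
  intros [Hs Ht].
  set (F := op_comp Sop (op_add Lop (op_comp (Xpow N (-1)) Rop)) g).
  assert (HF : forall y, F y =
    Cmult (RtoC (sqrt 2))
      (Cmult (Cplus (Defs.ind (frac_part (y / 2) < / 2))
                    (Cmult (cexp (-1 * (PI * (y / 2 / h)))) (Defs.ind (/ 2 <= frac_part (y / 2)))))
             (g (y / 2)))).
  { intros y. unfold F, op_add, op_comp, Lop, Rop, Sop. rewrite Xpow_apply. ring. }
  split.
  - intros y Hy. rewrite HF in Hy. destruct (Hs (y / 2)) as [k Hk].
    { intros E. apply Hy. rewrite E. ring. }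
    exists k. rewrite inv_N_eq_lat. simpl (INR 2). lra.
  - intros y. rewrite !HF. replace ((y + 1) / 2) with (y / 2 + / 2) by field.
    set (z := y / 2).
    rewrite Ht, Xpow_apply, ind_frac_lt_half_shift, ind_half_le_frac_shift, (phase_half_shift (-1)).
    destruct (classic (g z = RtoC 0)) as [E | E]; [rewrite E; ring|].
    assert (Hsq : Cmult (cexp (PI * (z / h))) (cexp (PI * (z / h))) = RtoC 1)
      by (apply phase_grid_sq, Hs, E).
    replace (-1 * (PI * (z / h))) with (- (PI * (z / h))) by ring.
    rewrite Rmult_1_l, (cexp_opp_of_sq _ Hsq).
    set (c := cexp (PI * (z / h))) in *.
    transitivity (Cmult (RtoC (sqrt 2))
      (Cmult (Cplus (Cmult (Cmult c c) (Defs.ind (frac_part z < / 2)))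
                    (Cmult c (Defs.ind (/ 2 <= frac_part z)))) (g z)));
      [ring | rewrite Hsq; ring].
Qed.

Lemma twisted_of_torus_mom v :
  torus_state v -> twisted_comb (op_add (Epop N) (op_comp (Ypow (- / 2)) (Opop N)) v).
Proof.
  intros Hv. pose proof (torus_fine v Hv) as Hf.
  replace (op_add (Epop N) (op_comp (Ypow (- / 2)) (Opop N)) v)
    with (fun x => Cplus (Epop N v x) (Ypow (- / 2) (Xpow N 1 (Epop N v)) x)).
  - apply twisted_of_fine_add_shift, Epop_fine_comb, Hf.
  - apply functional_extensionality. intros x. unfold op_add, op_comp, Ypow.
    rewrite Opop_fine_conj, (torus_Xpow (-1)) by assumption. reflexivity.
Qed.

Lemma torus_of_twisted_mom w :
  twisted_comb w -> torus_state (op_add (Epop N) (op_comp (Opop N) (Ypow (/ 2))) w).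
Proof.
  intros Hw. pose proof (twisted_fine w Hw) as Hf.
  assert (HY : Ypow (/ 2) w = Xpow N 1 w)
    by (apply functional_extensionality; exact (proj2 Hw)).
  replace (op_add (Epop N) (op_comp (Opop N) (Ypow (/ 2))) w)
    with (fun x => Cplus (Epop N w x) (Xpow N 1 (Epop N w) x)).
  - apply torus_of_fine_add_Xpow, Epop_fine_comb, Hf.
  - apply functional_extensionality. intros x. unfold op_add, op_comp.
    rewrite HY, Opop_fine_conj, Xpow_inv by exact (Xpow_fine 1 w Hf). reflexivity.
Qed.

Lemma Fop_torus v : torus_state v -> torus_state (Fop N v).
Proof. intros Hv. exact (torus_of_twisted_pos _ (twisted_of_torus_mom v Hv)). Qed.

Lemma Fdag_torus v : torus_state v -> torus_state (Fdag N v).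
Proof. intros Hv. exact (torus_of_twisted_mom _ (twisted_of_torus_pos v Hv)). Qed.

End EvenN.

End Lattice.

Lemma commutator_fixed (A B : op) f :
  A f = f -> A (B f) = B f -> commutator A B f = zero_state.
Proof.
  intros Hf HBf. unfold commutator, zero_state. rewrite HBf, Hf.
  apply functional_extensionality. intros x. Ceq_ring.
Qed.

Theorem mainTheorem5 (N : nat) (HN : (0 < N)%nat) (Heven : Nat.Even N)
  (l : list (C * Z * Z)) (m : nat) (Hm : (m < N)%nat) :
  let G := op_comp (Fdag N) (op_comp (Aop N l) (Fop N)) in
  commutator (Xpow N 1) G (Phi N m) = zero_state /\
  commutator (Ypow 1) G (Phi N m) = zero_state.
Proof.
  intros G.
  pose proof (Phi_torus N HN m) as HPhi.
  assert (HG : torus_state N (G (Phi N m)))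
    by exact (Fdag_torus N HN Heven _ (Aop_torus N HN l _ (Fop_torus N HN Heven _ HPhi))).
  split; apply commutator_fixed;
    first [apply (torus_Xpow N HN 1) | apply (torus_Ypow N)]; assumption.
Qed.
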